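(* Let $G$ be the directed graph with distinct vertices $v_1,v_2,\dots$, $w_2,w_3,\dots$, and $u_2,u_3,\dots$; write $w_1:=v_1$. Its edges are $v_i\to v_{i+1}$ ($i\ge1$), $w_i\to w_{i+1}$ ($i\ge1$), $w_i\to u_i$ ($i\ge2$), and $u_i\to v_{i+1}$ ($i\ge2$), and birthdates are $t(v_i)=t(w_i)=i$, $t(u_i)=i+\tfrac12$. Then $(G,t)$ is an infinite biosphere, and $v_2$ does not belong to any maximal element of $\mathrm{IAP}\cap\mathrm{CA}\cap\mathrm{REF}$.
   Context: An infinite biosphere is a directed graph $G$ together with a function $t$ assigning a real number $t(v)$ to each vertex, such that: (1) if $v$ is a parent of $w$ (edge from $v$ to $w$) then $t(v)<t(w)$; (2) for every $r\in\mathbb R$ at most finitely many vertices $v$ have $t(v)<r$; (3) every vertex has finitely many children; (4) $G$ is infinite. $v$ is an ancestor of $w$ (and $w$ a descendant of $v$) if there is a directed path $v=v_1,\dots,v_n=w$ with $n>1$. $\mathrm{IAP}$: sets $S$ of vertices such that no $v\in S$ has both infinitely many descendants in $S$ and infinitely many non-descendants in $S$. $\mathrm{CA}$: sets $S$ for which there exists $v\in S$ such that every $w\in S$ with $w\neq v$ is a descendant of $v$. $\mathrm{REF}$: sets $S$ such that every $v\in S$ with infinitely many descendants in $G$ has infinitely many descendants in $S$. A maximal element of a family of sets is a member not properly contained in any other member. *)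

From Stdlib Require Import Reals List Relations.
Open Scope R_scope.

Definition finite_pred {T : Type} (P : T -> Prop) : Prop :=
  exists l : list T, forall x, P x -> In x l.
Definition infinite_pred {T : Type} (P : T -> Prop) : Prop := ~ finite_pred P.

(* A directed graph on vertex type T is given by an edge relation E
   (E v w  means v is a parent of w); t is the birthdate function. *)
Definition is_biosphere {T : Type} (E : T -> T -> Prop) (t : T -> R) : Prop :=
  (forall v w, E v w -> t v < t w) /\
  (forall r : R, finite_pred (fun v => t v < r)) /\
  (forall v, finite_pred (fun w => E v w)) /\
  infinite_pred (fun _ : T => True).

Definition descendant {T : Type} (E : T -> T -> Prop) (v w : T) : Prop :=
  clos_trans T E v w.

Definition IAP {T : Type} (E : T -> T -> Prop) (S : T -> Prop) : Prop :=
  forall v, S v ->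
    ~ (infinite_pred (fun w => S w /\ descendant E v w) /\
       infinite_pred (fun w => S w /\ ~ descendant E v w)).

Definition CA {T : Type} (E : T -> T -> Prop) (S : T -> Prop) : Prop :=
  exists v, S v /\ forall w, S w -> w <> v -> descendant E v w.

Definition REF {T : Type} (E : T -> T -> Prop) (S : T -> Prop) : Prop :=
  forall v, S v -> infinite_pred (fun w => descendant E v w) ->
    infinite_pred (fun w => S w /\ descendant E v w).

Definition maximal_in {T : Type} (F : (T -> Prop) -> Prop) (M : T -> Prop) : Prop :=
  F M /\ forall S, F S -> (forall x, M x -> S x) -> forall x, S x -> M x.

Definition IAP_CA_REF {T : Type} (E : T -> T -> Prop) (S : T -> Prop) : Prop :=
  IAP E S /\ CA E S /\ REF E S.

(* The concrete graph.  Index shifts: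
   vV i = v_(i+1)  (i >= 0),  so vV 0 = v_1 = w_1,
   vW i = w_(i+2)  (i >= 0),
   vU i = u_(i+2)  (i >= 0). *)
Inductive vert : Type :=
| vV : nat -> vert
| vW : nat -> vert
| vU : nat -> vert.

Inductive G_edge : vert -> vert -> Prop :=
| e_vv : forall i, G_edge (vV i) (vV (S i))
| e_w1w2 : G_edge (vV 0) (vW 0)                      (* w_1 = v_1 -> w_2 *)
| e_ww : forall i, G_edge (vW i) (vW (S i))
| e_wu : forall i, G_edge (vW i) (vU i)
| e_uv : forall i, G_edge (vU i) (vV (S (S i))).     (* u_i -> v_(i+1), i>=2 *)

Definition G_t (x : vert) : R :=
  match x with
  | vV i => INR i + 1
  | vW i => INR i + 2
  | vU i => INR i + 2 + / 2
  end.

(* If a member M of IAP ∩ CA ∩ REF contains v_2, then REF forces M to contain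
   infinitely many descendants of v_2, all of which are v_j's, and IAP then
   leaves M only finitely many non-descendants of v_2.  Adding the root v_1
   and any w_k to M keeps it in the family: v_1 witnesses CA, every vertex
   is an ancestor of all v_j with j large, so the infinitely many v_j in M
   give REF, and a vertex x misses only finitely many of them, which gives
   IAP.  A maximal M would therefore contain every w_k; but the w_k are
   infinitely many non-descendants of v_2. *)

From Stdlib Require Import Reals List Relations Lia Lra Classical.

Definition adjoin {T : Type} (S : T -> Prop) (a : T) : T -> Prop :=
  fun x => S x \/ x = a.

Lemma clos_trans_preserves {T : Type} (R : T -> T -> Prop) (P : T -> Prop) :
  (forall x y, R x y -> P x -> P y) ->
  forall x y, clos_trans T R x y -> P x -> P y.
Proof. intros HR x y H; induction H; eauto. Qed.

Lemma CA_adjoin_root {T : Type} (E : T -> T -> Prop) (S : T -> Prop) (r : T) :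
  (forall w, w <> r -> descendant E r w) -> CA E (adjoin S r).
Proof.
  intros Hr; exists r; split; [now right|].
  intros w _ Hw; now apply Hr.
Qed.

Lemma IAP_nondesc_finite {T : Type} (E : T -> T -> Prop) (S : T -> Prop) (v : T) :
  IAP E S -> S v -> infinite_pred (fun w => S w /\ descendant E v w) ->
  finite_pred (fun w => S w /\ ~ descendant E v w).
Proof. intros HI Hv Hinf; apply NNPP; intros Hfin; exact (HI v Hv (conj Hinf Hfin)). Qed.

Definition vert_index (x : vert) : nat :=
  match x with vV i | vW i | vU i => i end.

Definition verts_below (n : nat) : list vert :=
  map vV (seq 0 n) ++ map vW (seq 0 n) ++ map vU (seq 0 n).

Lemma in_verts_below (x : vert) (n : nat) :
  (vert_index x < n)%nat -> In x (verts_below n).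
Proof.
  intros Hx; unfold verts_below; rewrite !in_app_iff, !in_map_iff.
  destruct x as [i|i|i]; simpl in Hx;
    [left | right; left | right; right]; exists i; split; auto; apply in_seq; lia.
Qed.

Lemma finite_pred_of_index_bounded (P : vert -> Prop) (n : nat) :
  (forall x, P x -> (vert_index x < n)%nat) -> finite_pred P.
Proof. intros Hn; exists (verts_below n); intros x Hx; apply in_verts_below, Hn, Hx. Qed.

Lemma list_index_bounded (l : list vert) :
  exists n, forall x, In x l -> (vert_index x < n)%nat.
Proof.
  induction l as [|y l [n Hn]]; [now exists 0%nat|].
  exists (S (vert_index y + n)); intros x [<- | Hx]; [lia|].
  specialize (Hn x Hx); lia.
Qed.

Lemma index_bounded_of_finite_pred (P : vert -> Prop) :
  finite_pred P -> exists n, forall x, P x -> (vert_index x < n)%nat.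
Proof.
  intros [l Hl]; destruct (list_index_bounded l) as [n Hn].
  exists n; intros x Px; apply Hn, Hl, Px.
Qed.

Lemma infinite_pred_of_unbounded (P : vert -> Prop) :
  (forall n, exists x, P x /\ (n <= vert_index x)%nat) -> infinite_pred P.
Proof.
  intros Hunb Hfin; destruct (index_bounded_of_finite_pred P Hfin) as [n Hn].
  destruct (Hunb n) as [x [Px Hx]]; specialize (Hn x Px); lia.
Qed.

Lemma unbounded_of_infinite_pred (P : vert -> Prop) :
  infinite_pred P -> forall n, exists x, P x /\ (n <= vert_index x)%nat.
Proof.
  intros Hinf n; apply NNPP; intros Hno; apply Hinf.
  apply (finite_pred_of_index_bounded P n); intros x Px.
  destruct (Nat.lt_ge_cases (vert_index x) n) as [Hlt|Hge]; [exact Hlt|].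
  exfalso; eauto.
Qed.

Lemma G_biosphere : is_biosphere G_edge G_t.
Proof.
  split; [|split; [|split]].
  - intros v w H; inversion H; subst; unfold G_t; rewrite ?S_INR; simpl; lra.
  - intros r; destruct (INR_archimed 1 r ltac:(lra)) as [N HN].
    apply (finite_pred_of_index_bounded _ N); intros x Ht.
    apply INR_lt; pose proof (pos_INR (vert_index x)).
    destruct x; simpl in *; lra.
  - intros [[|i]|i|i].
    + exists (vV 1 :: vW 0 :: nil); intros w H; inversion H; simpl; tauto.
    + exists (vV (S (S i)) :: nil); intros w H; inversion H; simpl; tauto.
    + exists (vW (S i) :: vU i :: nil); intros w H; inversion H; simpl; tauto.
    + exists (vV (S (S i)) :: nil); intros w H; inversion H; simpl; tauto.
  - apply infinite_pred_of_unbounded; intros n; exists (vW n); simpl; auto.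
Qed.

Notation desc := (descendant G_edge).

Lemma desc_vV_lt (i j : nat) : (i < j)%nat -> desc (vV i) (vV j).
Proof.
  induction j as [|j IH]; intros Hij; [lia|].
  destruct (Nat.eq_dec i j) as [->|]; [apply t_step; constructor|].
  apply t_trans with (vV j); [apply IH; lia | apply t_step; constructor].
Qed.

Lemma desc_of_edge_vV (x : vert) (i j : nat) :
  G_edge x (vV i) -> (i <= j)%nat -> desc x (vV j).
Proof.
  intros Hx Hij; destruct (Nat.eq_dec i j) as [<-|]; [now apply t_step|].
  apply t_trans with (vV i); [now apply t_step | apply desc_vV_lt; lia].
Qed.

(* The least [j] such that [vV j] is a descendant of [x]. *)
Definition entry (x : vert) : nat :=
  match x with vV i => S i | vW i | vU i => S (S i) end.

Lemma desc_vV_from_entry (x : vert) (j : nat) : (entry x <= j)%nat -> desc x (vV j).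
Proof.
  destruct x as [i|i|i]; simpl; intros Hj.
  - exact (desc_of_edge_vV _ _ _ (e_vv i) Hj).
  - apply t_trans with (vU i); [apply t_step; constructor|].
    exact (desc_of_edge_vV _ _ _ (e_uv i) Hj).
  - exact (desc_of_edge_vV _ _ _ (e_uv i) Hj).
Qed.

Lemma desc_vV0 (w : vert) : w <> vV 0 -> desc (vV 0) w.
Proof.
  assert (HW : forall i, desc (vV 0) (vW i)).
  { induction i as [|i IH]; [apply t_step; constructor|].
    apply t_trans with (vW i); [exact IH | apply t_step; constructor]. }
  intros Hw; destruct w as [[|i]|i|i]; [congruence | apply desc_vV_lt; lia | apply HW |].
  apply t_trans with (vW i); [apply HW | apply t_step; constructor].
Qed.

Lemma desc_vV_succ_inv (i : nat) (w : vert) :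
  desc (vV (S i)) w -> exists j, w = vV (S j).
Proof.
  intros Hw; apply (clos_trans_preserves G_edge (fun x => exists j, x = vV (S j)))
    with (vV (S i)); [| exact Hw | eauto].
  intros x y Hxy [j ->]; inversion Hxy; eauto.
Qed.

Lemma desc_vV1_infinite : infinite_pred (desc (vV 1)).
Proof.
  apply infinite_pred_of_unbounded; intros n.
  exists (vV (S (S n))); split; [apply desc_vV_lt; lia | simpl; lia].
Qed.

Lemma unbounded_of_infinite_desc_vV1 (M : vert -> Prop) :
  infinite_pred (fun w => M w /\ desc (vV 1) w) ->
  forall n, exists j, (n <= j)%nat /\ M (vV j).
Proof.
  intros Hinf n; destruct (unbounded_of_infinite_pred _ Hinf n) as [w [[Mw Hw] Hn]].
  destruct (desc_vV_succ_inv _ _ Hw) as [j ->]; eauto.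
Qed.

Section AdjoinRootAndW.

Variable M : vert -> Prop.
Hypothesis M_vV_unbounded : forall n, exists j, (n <= j)%nat /\ M (vV j).
Hypothesis M_nondesc_finite : finite_pred (fun w => M w /\ ~ desc (vV 1) w).
Variable k : nat.

Let M' := adjoin (adjoin M (vW k)) (vV 0).

Lemma adjoin_IAP : IAP G_edge M'.
Proof.
  intros x _ [_ Hnondesc]; apply Hnondesc.
  destruct (index_bounded_of_finite_pred _ M_nondesc_finite) as [n Hn].
  apply (finite_pred_of_index_bounded _ (S (k + n + entry x))).
  intros w [[[Mw | ->] | ->] Hw]; simpl; try lia.
  destruct (classic (desc (vV 1) w)) as [H1|H1]; [|specialize (Hn w (conj Mw H1)); lia].
  destruct (desc_vV_succ_inv _ _ H1) as [j ->]; simpl.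
  destruct (Nat.lt_ge_cases (S j) (entry x)) as [Hlt|Hge]; [lia|].
  exfalso; now apply Hw, desc_vV_from_entry.
Qed.

Lemma adjoin_REF : REF G_edge M'.
Proof.
  intros x _ _; apply infinite_pred_of_unbounded; intros n.
  destruct (M_vV_unbounded (n + entry x)) as [j [Hj Mj]].
  exists (vV j); repeat split; [left; left; exact Mj | apply desc_vV_from_entry; lia | simpl; lia].
Qed.

Lemma adjoin_IAP_CA_REF : IAP_CA_REF G_edge M'.
Proof. split; [exact adjoin_IAP | split; [apply CA_adjoin_root, desc_vV0 | exact adjoin_REF]]. Qed.

End AdjoinRootAndW.

Theorem mainTheorem12 :
  is_biosphere G_edge G_t /\
  forall M : vert -> Prop, maximal_in (IAP_CA_REF G_edge) M -> ~ M (vV 1).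
Proof.
  split; [exact G_biosphere|].
  intros M [[HI [_ HR]] Hmax] H1.
  pose proof (HR _ H1 desc_vV1_infinite) as Hinf.
  pose proof (IAP_nondesc_finite _ _ _ HI H1 Hinf) as Hfin.
  pose proof (unbounded_of_infinite_desc_vV1 M Hinf) as Hunb.
  assert (HW : forall k, M (vW k)).
  { intros k; apply (Hmax _ (adjoin_IAP_CA_REF M Hunb Hfin k));
      [intros x Hx; left; left; exact Hx | left; right; reflexivity]. }
  apply (infinite_pred_of_unbounded (fun w => M w /\ ~ desc (vV 1) w)); [|exact Hfin].
  intros n; exists (vW n); repeat split; [apply HW | | simpl; lia].
  intros Hd; destruct (desc_vV_succ_inv _ _ Hd) as [j Hj]; discriminate.
Qed.
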